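(* For an integer $n\ge 3$ and a finite simple graph $H$ without a universal vertex, $${\rm dim}_s(K_{n,n}^{-M}\diamond H)=2n\sum_{j=1}^{k(H)}t_j(H)-n\,k(H).$$
   Context: The modular product $G\diamond H$ has vertex set $V(G)\times V(H)$; distinct vertices $(g,h)$ and $(g',h')$ are adjacent iff ($g=g'$ and $hh'\in E(H)$), or ($gg'\in E(G)$ and $h=h'$), or ($gg'\in E(G)$ and $hh'\in E(H)$), or ($g\neq g'$, $h\neq h'$, $gg'\notin E(G)$ and $hh'\notin E(H)$). $K_{n,n}^{-M}$ is the complete bipartite graph $K_{n,n}$ with a perfect matching removed. A vertex is universal if its closed neighborhood is the whole vertex set. Vertices $h,h'$ are twins if $N_H[h]=N_H[h']$. A $\gamma_H$-pair is a set $\{h,h'\}$ of two distinct vertices with $N_H[h]\cap N_H[h']=\emptyset$ and $N_H[h]\cup N_H[h']=V(H)$. Let $T_1(H),\dots,T_{k(H)}(H)$ be the partition of $V(H)$ in which each twin class of vertices not belonging to any $\gamma_H$-pair is one part, and for each $\gamma_H$-pair $\{h,h'\}$ the union of the twin classes of $h$ and of $h'$ is one part; $t_j(H)=|T_j(H)|$. ${\rm dim}_s(X)$ is the strong metric dimension: the minimum size of $S\subseteq V(X)$ such that for all distinct $x,y$ some $z\in S$ has $d_X(y,z)=d_X(y,x)+d_X(x,z)$ or $d_X(x,z)=d_X(x,y)+d_X(y,z)$. *)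

From mathcomp Require Import all_boot.

Set Implicit Arguments. Unset Strict Implicit. Unset Printing Implicit Defensive.

(* A finite simple graph: vertex type V : finType, adjacency e : rel V,
   assumed symmetric and irreflexive where needed. *)

Section Graphs.
Variable V : finType.
Variable e : rel V.

Definition cnbh (v : V) : {set V} := [set x | (x == v) || e v x].

Definition universal (v : V) : bool := cnbh v == [set: V].

Definition twins (h h' : V) : bool := cnbh h == cnbh h'.

Definition gpair (h h' : V) : bool :=
  [&& h != h', cnbh h :&: cnbh h' == set0 & cnbh h :|: cnbh h' == [set: V]].

Definition twin_class (h : V) : {set V} := [set x | twins x h].

Definition tpart (h : V) : {set V} :=
  if [exists h', gpair h h'] then
    twin_class h :|: \bigcup_(h' | gpair h h') twin_class h'
  else twin_class h.

Definition tpartition : {set {set V}} := [set tpart h | h in V].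

Definition kH : nat := #|tpartition|.

Fixpoint walk (k : nat) (x y : V) : bool :=
  match k with
  | 0 => x == y
  | k'.+1 => [exists z, e x z && walk k' z y]
  end.

(* graph distance: Some d if y reachable from x (shortest walk length d,
   which is always < #|V|), None otherwise *)
Definition dist (x y : V) : option nat :=
  ohead [seq k <- iota 0 #|V| | walk k x y].

Definition on_geodesic (a b c : V) : bool :=
  match dist a b, dist b c, dist a c with
  | Some p, Some q, Some r => r == p + q
  | _, _, _ => false
  end.

Definition strong_resolving (S : {set V}) : bool :=
  [forall x, forall y, (x != y) ==>
    [exists z, (z \in S) && (on_geodesic y x z || on_geodesic x y z)]].

(* strong metric dimension: minimum size of a strong resolving set
   (V itself is always one, so #|V| is a harmless default) *)
Definition sdim : nat :=
  \big[minn/#|V|]_(S : {set V} | strong_resolving S) #|S|.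

End Graphs.

Definition modprod (G H : finType) (eG : rel G) (eH : rel H) : rel (G * H) :=
  fun x y =>
    (x != y) &&
    [|| (x.1 == y.1) && eH x.2 y.2,
        eG x.1 y.1 && (x.2 == y.2),
        eG x.1 y.1 && eH x.2 y.2
      | [&& x.1 != y.1, x.2 != y.2, ~~ eG x.1 y.1 & ~~ eH x.2 y.2]].

(* K_{n,n} minus a perfect matching: vertices (side, index);
   (b,i) ~ (b',j) iff b <> b' and i <> j *)
Definition KnnM (n : nat) : rel (bool * 'I_n) :=
  fun x y => (x.1 != y.1) && (x.2 != y.2).
Arguments KnnM n : clear implicits.

From mathcomp Require Import all_boot.
From mathcomp Require Import zify.
Set Implicit Arguments. Unset Strict Implicit. Unset Printing Implicit Defensive.

(* In a graph of diameter at most 3, a pair of distinct twins, or a pair of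
   vertices with disjoint closed neighbourhoods, is strongly resolved by no
   third vertex, so every strong resolving set contains one vertex of each such
   pair.  In K_{n,n}^{-M} <> H two vertices (g,h), (g',h') form such a pair
   whenever g and g' have the same index and h, h' lie in the same part
   T_j(H); hence a strong resolving set misses at most one vertex in each of
   the n k(H) classes so obtained.  Conversely, the complement of a set of
   representatives of these classes is strongly resolving: a vertex y and its
   mate y' (same index and same h, other side) are at distance 3, and every
   vertex outside the class of y is adjacent to one of them and at distance 2
   from the other, hence lies on a y--y' geodesic. *)

Lemma meetP (T : finType) (A B : {set T}) :
  reflect (exists2 w, w \in A & w \in B) (~~ [disjoint A & B]).
Proof.
rewrite -setI_eq0; apply: (iffP (set0Pn _)) => [[w /setIP[]]|[w wA wB]].
  by exists w.
by exists w; rewrite inE wA.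
Qed.

Lemma big_minn_attained (I : finType) (P : pred I) (F : I -> nat) d i0 :
  P i0 -> F i0 <= d -> (forall i, P i -> F i0 <= F i) ->
  \big[minn/d]_(i | P i) F i = F i0.
Proof.
move=> Pi0 le_d minF; apply/eqP; rewrite eqn_leq; apply/andP; split; last first.
  by apply: (big_ind (leq (F i0))) => // a b; rewrite leq_min => ->.
have : i0 \in index_enum I by rewrite mem_index_enum.
elim: (index_enum I) => // i s IHs; rewrite inE big_cons => /orP[/eqP <-|i0s].
  by rewrite Pi0 geq_minl.
by case: ifP => _; rewrite ?geq_min IHs ?orbT.
Qed.

Section Distance.
Variables (V : finType) (e : rel V).
Hypotheses (e_sym : symmetric e) (e_irr : irreflexive e).

Local Notation N := (cnbh e).

Lemma mem_cnbh v w : (w \in N v) = (w == v) || e v w.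
Proof. by rewrite inE. Qed.

Lemma cnbh_refl v : v \in N v.
Proof. by rewrite inE eqxx. Qed.

Lemma mem_cnbhC v w : (w \in N v) = (v \in N w).
Proof. by rewrite !inE eq_sym e_sym. Qed.

Lemma adj_cnbh v w : e v w = (v != w) && (w \in N v).
Proof. by rewrite mem_cnbh eq_sym; case: eqP => [->|]; rewrite ?e_irr. Qed.

Lemma walk1E x y : walk e 1 x y = e x y.
Proof.
apply/existsP/idP => [[z /andP[exz /eqP <-]] // | exy].
by exists y; rewrite exy eqxx.
Qed.

Lemma walk2E x y : walk e 2 x y = [exists z, e x z && e z y].
Proof.
change (walk e 2 x y) with [exists z, e x z && walk e 1 z y].
by apply: eq_existsb => z; rewrite walk1E.
Qed.

Lemma walkS k x z y : e x z -> walk e k z y -> walk e k.+1 x y.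
Proof. by move=> exz wzy; apply/existsP; exists z; rewrite exz. Qed.

Lemma cnbh_meet_walk x y w : w \in N x -> w \in N y ->
  exists2 k, k <= 2 & walk e k x y.
Proof.
rewrite !mem_cnbh => /orP[/eqP wx|exw] /orP[/eqP wy|eyw].
- by exists 0 => //; rewrite /= -wx wy.
- by exists 1 => //; rewrite walk1E e_sym -wx.
- by exists 1 => //; rewrite walk1E -wy.
- by exists 2 => //; rewrite walk2E; apply/existsP; exists w; rewrite exw e_sym.
Qed.

Lemma dist_Some x y d : walk e d x y -> (forall k, k < d -> ~~ walk e k x y) ->
  d < #|V| -> dist e x y = Some d.
Proof.
move=> wd wlt ltdV; rewrite /dist.
have [m ->] : exists m, #|V| = d + m.+1 by exists (#|V| - d).-1; lia.
rewrite iotaD filter_cat add0n /= wd.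
suff -> : [seq k <- iota 0 d | walk e k x y] = [::] by [].
apply/eqP; rewrite -[_ == _]negbK -has_filter; apply/hasPn => k.
by rewrite mem_iota => /wlt.
Qed.

(* Agrees with the graph distance when the diameter is at most 3. *)
Definition dist3 x y : nat :=
  if x == y then 0 else if e x y then 1
  else if [disjoint N x & N y] then 3 else 2.

Definition geodesic3 a b c : bool := dist3 a c == dist3 a b + dist3 b c.

Lemma dist3C x y : dist3 x y = dist3 y x.
Proof. by rewrite /dist3 eq_sym e_sym disjoint_sym. Qed.

Lemma dist3_le3 x y : dist3 x y <= 3.
Proof. by rewrite /dist3; repeat case: ifP. Qed.

Lemma dist3xx x : dist3 x x = 0.
Proof. by rewrite /dist3 eqxx. Qed.

Lemma dist3_gt0 x y : x != y -> 0 < dist3 x y.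
Proof. by rewrite /dist3 => /negbTE ->; repeat case: ifP. Qed.

Lemma dist3_adj x y : e x y -> dist3 x y = 1.
Proof.
by move=> exy; rewrite /dist3 exy; case: eqP => // exy'; rewrite exy' e_irr in exy.
Qed.

Lemma dist3_disjoint x y : [disjoint N x & N y] -> dist3 x y = 3.
Proof.
move=> dxy; have := disjointFl dxy (cnbh_refl y).
by rewrite mem_cnbh eq_sym /dist3 dxy => /norP[/negbTE -> /negbTE ->].
Qed.

Lemma dist3_meet x y : x != y -> ~~ e x y -> ~~ [disjoint N x & N y] ->
  dist3 x y = 2.
Proof. by rewrite /dist3 => /negbTE -> /negbTE -> /negbTE ->. Qed.

Lemma walk_dist3 x y k : k <= 2 -> walk e k x y -> dist3 x y <= k.
Proof.
rewrite /dist3; case: k => [|[|[|//]]] _; first by move=> /= ->.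
  by rewrite walk1E => ->; case: eqP.
rewrite walk2E => /existsP[z /andP[exz ezy]]; case: eqP => // _; case: ifP => // _.
case: ifP => // dxy; have := disjointFr dxy (_ : z \in N x).
by rewrite mem_cnbh exz orbT mem_cnbhC mem_cnbh ezy orbT => /(_ isT).
Qed.

Lemma walk_dist3_le2 x y : dist3 x y <= 2 -> walk e (dist3 x y) x y.
Proof.
case: (dist3 x y =P 2) => [d2 _|nd2].
  have /meetP[w wx wy] : ~~ [disjoint N x & N y].
    by move: d2; rewrite /dist3; case: ifP => //; case: ifP => //; case: ifP.
  have [k le_k2 wk] := cnbh_meet_walk wx wy.
  suff -> : dist3 x y = k by [].
  by apply/eqP; rewrite eqn_leq walk_dist3 // d2.
case: (x =P y) => [->|/eqP nxy]; first by rewrite dist3xx => _; exact: eqxx.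
case exy: (e x y); first by rewrite dist3_adj // walk1E.
by move: nd2; rewrite /dist3 (negbTE nxy) exy; case: ifP.
Qed.

Lemma twins_dist3 x y z : N x = N y -> z != x -> z != y ->
  dist3 x z = dist3 y z.
Proof.
move=> Nxy zx zy; rewrite /dist3 !(eq_sym _ z) (negbTE zx) (negbTE zy).
by rewrite !adj_cnbh Nxy !(eq_sym _ z) zx zy.
Qed.

Lemma twins_not_geodesic3 x y z : x != y -> N x = N y -> z != x ->
  ~~ geodesic3 y x z.
Proof.
move=> nxy Nxy zx; have yx : 0 < dist3 y x by rewrite dist3_gt0 // eq_sym.
rewrite /geodesic3; case: (z =P y) => [->|/eqP zy].
  by rewrite dist3xx; case: (dist3 y x) yx.
by rewrite -(twins_dist3 Nxy zx zy) -{1}[dist3 x z]add0n eqn_add2r eq_sym -lt0n yx.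
Qed.

Lemma disjoint_not_geodesic3 x y z : [disjoint N x & N y] -> z != x ->
  ~~ geodesic3 y x z.
Proof.
move=> dxy zx; rewrite /geodesic3 [dist3 y x]dist3C (dist3_disjoint dxy).
have : 0 < dist3 x z by rewrite dist3_gt0 // eq_sym.
have := dist3_le3 y z; lia.
Qed.

Lemma geodesic3_disjoint_cnbh y z x : [disjoint N y & N z] -> y \in N x ->
  ~~ [disjoint N x & N z] -> geodesic3 y x z.
Proof.
move=> dyz yx /meetP[w wx wz].
have nxy : x != y.
  by apply: contraTneq wz => exy; rewrite (disjointFr dyz) // -exy.
have exy : e x y by rewrite adj_cnbh nxy.
have xy : x \in N y by rewrite mem_cnbhC.
have nxz : x != z.
  by apply: contraTneq xy => ->; rewrite (disjointFl dyz) // cnbh_refl.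
have nexz : ~~ e x z.
  by rewrite adj_cnbh nxz mem_cnbhC (disjointFr dyz).
rewrite /geodesic3 (dist3_disjoint dyz) dist3C (dist3_adj exy) dist3_meet //.
by apply/meetP; exists w.
Qed.

Lemma geodesic3_disjoint y z x : [disjoint N y & N z] ->
  ~~ [disjoint N x & N y] -> ~~ [disjoint N x & N z] ->
  (y \in N x) || (z \in N x) -> geodesic3 y x z.
Proof.
move=> dyz mxy mxz /orP[yx|zx]; first exact: geodesic3_disjoint_cnbh.
rewrite /geodesic3 addnC dist3C [dist3 y x]dist3C [dist3 x z]dist3C.
by apply: geodesic3_disjoint_cnbh; rewrite // disjoint_sym.
Qed.

Section BoundedDiameter.
Hypothesis diam3 : forall x y, exists2 k, k <= 3 & walk e k x y.
Hypothesis card_gt3 : 3 < #|V|.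

Lemma dist_dist3 x y : dist e x y = Some (dist3 x y).
Proof.
have walk_lt k : k < dist3 x y -> ~~ walk e k x y.
  move=> lt_kd; apply/negP => wk.
  have le_k2 : k <= 2 by rewrite -ltnS (leq_trans lt_kd) ?dist3_le3.
  by have := leq_ltn_trans (walk_dist3 le_k2 wk) lt_kd; rewrite ltnn.
apply: dist_Some => //; last exact: leq_ltn_trans (dist3_le3 x y) card_gt3.
have [le_d2|] := leqP (dist3 x y) 2; first exact: walk_dist3_le2.
move=> lt2d; have d3 : dist3 x y = 3 by apply/eqP; rewrite eqn_leq dist3_le3.
have [k le_k3 wk] := diam3 x y; suff k3 : k = 3 by rewrite d3 -k3.
apply/eqP; rewrite eqn_leq le_k3 ltnNge; apply: contraL wk => le_k2.
by apply: walk_lt; rewrite d3 ltnS.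
Qed.

Lemma on_geodesicE a b c : on_geodesic e a b c = geodesic3 a b c.
Proof. by rewrite /on_geodesic !dist_dist3. Qed.

Lemma strong_resolving_twins_or_disjoint (S : {set V}) x y :
  strong_resolving e S -> x != y -> N x = N y \/ [disjoint N x & N y] ->
  (x \in S) || (y \in S).
Proof.
move=> resS nxy Nxy; move/forallP/(_ x)/forallP/(_ y): resS.
rewrite nxy /= => /existsP[z /andP[zS]]; rewrite !on_geodesicE.
case: (z =P x) => [<-|/eqP zx]; first by rewrite zS.
case: (z =P y) => [<-|/eqP zy]; first by rewrite zS orbT.
case: Nxy => [Nxy|dxy].
  rewrite (negbTE (twins_not_geodesic3 nxy Nxy zx)).
  by rewrite (negbTE (twins_not_geodesic3 _ (esym Nxy) zy)) // eq_sym.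
rewrite (negbTE (disjoint_not_geodesic3 dxy zx)).
by rewrite (negbTE (disjoint_not_geodesic3 _ zy)) // disjoint_sym.
Qed.

Lemma strong_resolving_compl (A : {set V}) :
  (forall x y, x \in A -> y \in A -> x != y ->
     exists2 z, z \notin A & geodesic3 y x z) ->
  strong_resolving e (~: A).
Proof.
move=> resA; apply/forallP => x; apply/forallP => y; apply/implyP => nxy.
have geo_end u v : geodesic3 u v v by rewrite /geodesic3 dist3xx addn0.
case xA: (x \in A); last first.
  by apply/existsP; exists x; rewrite inE xA on_geodesicE geo_end.
case yA: (y \in A); last first.
  by apply/existsP; exists y; rewrite inE yA !on_geodesicE geo_end orbT.
have [z zA geo] := resA x y xA yA nxy.
by apply/existsP; exists z; rewrite inE zA on_geodesicE geo.
Qed.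

End BoundedDiameter.

End Distance.

Section TwinPartition.
Variables (T : finType) (eH : rel T).

Local Notation N := (cnbh eH).

(* The equivalence whose classes are the parts T_j(H): twins, or twins of a
   gamma_H-partner (whose closed neighbourhood is the complement). *)
Definition tequiv h h' : bool := (N h' == N h) || (N h' == ~: N h).

Lemma tequiv_equivalence : equivalence_rel tequiv.
Proof.
move=> h h' h''; split; first by rewrite /tequiv eqxx.
by case/orP=> /eqP E; rewrite /tequiv E ?setCK // orbC.
Qed.

Lemma gpairE h h' : gpair eH h h' = (N h' == ~: N h).
Proof.
rewrite /gpair; apply/idP/eqP => [/and3P[_ /eqP I /eqP U]|E].
  apply/setP => x; rewrite in_setC.
  have := congr1 (fun S : {set T} => x \in S) I.
  have := congr1 (fun S : {set T} => x \in S) U.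
  rewrite /= in_setI in_setU in_set0 in_setT.
  by case: (x \in N h); case: (x \in N h').
rewrite E setICr setUCr !eqxx !andbT.
have := cnbh_refl eH h'; rewrite E in_setC; apply: contraNneq => ->.
exact: cnbh_refl.
Qed.

Lemma tpartE h : tpart eH h = [set h' | tequiv h h'].
Proof.
apply/setP => h'; rewrite /tpart inE /tequiv.
case: existsP => [_|no_pair].
  rewrite in_setU inE /twins; congr (_ || _); apply/bigcupP/idP => [[h'']|E].
    by rewrite gpairE inE /twins => /eqP <- /eqP ->.
  by exists h'; rewrite ?gpairE // inE /twins.
rewrite inE /twins -gpairE; case: (boolP (gpair eH h h')) => [pair|_].
  by case: no_pair; exists h'.
by rewrite orbF.
Qed.

Lemma tpartitionE : tpartition eH = equivalence_partition tequiv [set: T].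
Proof.
apply/setP => X; apply/imsetP/imsetP => -[h _ ->]; exists h => //;
  by apply/setP => h'; rewrite tpartE !inE.
Qed.

Lemma partition_tpartition : partition (tpartition eH) [set: T].
Proof.
rewrite tpartitionE; apply: equivalence_partitionP => x y z _ _ _.
exact: tequiv_equivalence.
Qed.

Lemma sum_card_tpartition : \sum_(X in tpartition eH) #|X| = #|T|.
Proof. by rewrite -(card_partition partition_tpartition) cardsT. Qed.

Lemma eq_pblock_tpartition h h' :
  (pblock (tpartition eH) h == pblock (tpartition eH) h') = tequiv h h'.
Proof.
have /and3P[/eqP cover_T triv _] := partition_tpartition.
rewrite eq_pblock ?cover_T // {1}tpartitionE pblock_equivalence_partition //.
by move=> x y z _ _ _; exact: tequiv_equivalence.
Qed.

End TwinPartition.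

Section ModularProduct.
Variables (n : nat) (T : finType) (eH : rel T).

Local Notation G := (bool * 'I_n)%type.
Local Notation eG := (KnnM n).
Local Notation P := (modprod (KnnM n) eH).

Definition mate (g : G) : G := (~~ g.1, g.2).

Lemma mateK : involutive mate.
Proof. by case=> b i; rewrite /mate negbK. Qed.

Lemma mate_neq g : (mate g == g) = false.
Proof. by case: g => -[] i; rewrite /mate xpair_eqE. Qed.

Lemma neq_mate g : (g == mate g) = false.
Proof. by rewrite eq_sym mate_neq. Qed.

Lemma neq_index (g g' : G) : g'.2 != g.2 -> (g' == g) = false.
Proof. by apply: contraNF => /eqP ->. Qed.

Lemma KnnMC g g' : eG g g' = eG g' g.
Proof. by rewrite /KnnM eq_sym (eq_sym g.2). Qed.

Lemma KnnM_eq_index g g' : g'.2 = g.2 -> eG g g' = false.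
Proof. by rewrite /KnnM => ->; rewrite eqxx andbF. Qed.

Lemma KnnM_mate g g' : g.2 != g'.2 -> eG g (mate g') = ~~ eG g g'.
Proof. by rewrite /KnnM /= => ->; rewrite !andbT; case: g.1; case: g'.1. Qed.

Lemma mateP g g' : [\/ g' = g, g' = mate g | g'.2 != g.2].
Proof.
case: g g' => [b i] [b' i'] /=; case: (i' =P i) => [->|/eqP ne]; last exact: Or33.
by case: (b' =P b) => [->|nb]; [apply: Or31 | apply: Or32; case: b b' nb => -[]].
Qed.

Definition pnbh (g : G) (A : {set T}) : {set G * T} :=
  [set w | if w.1 == g then w.2 \in A else eG g w.1 == (w.2 \in A)].

Lemma cnbh_modprod x : cnbh P x = pnbh x.1 (cnbh eH x.2).
Proof.
apply/setP => -[g1 k]; case: x => [g h]; rewrite !inE /modprod /= !xpair_eqE.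
case: (g1 =P g) => [->|/eqP ng].
  by rewrite /KnnM !eqxx /= orbF (eq_sym h k); case: (k == h).
rewrite (eq_sym g g1) (negbTE ng) /= (eq_sym h k).
by case: (eG g g1); case: (k == h); case: (eH h k).
Qed.

Lemma pnbhC g A : pnbh g (~: A) = ~: pnbh g A.
Proof.
apply/setP => w; rewrite !inE; case: (w.1 == g) => //.
by case: (eG g w.1); case: (w.2 \in A).
Qed.

Lemma pnbh_mate_compl g A : pnbh (mate g) (~: A) = pnbh g A.
Proof.
apply/setP => w; rewrite !inE; case: (mateP g w.1) => [->|->|ne].
- by rewrite neq_mate eqxx KnnM_eq_index //; case: (w.2 \in A).
- by rewrite mate_neq eqxx KnnM_eq_index //; case: (w.2 \in A).
- rewrite !neq_index // [eG (mate g) _]KnnMC KnnM_mate // [eG w.1 g]KnnMC.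
  by case: (eG g w.1); case: (w.2 \in A).
Qed.

Lemma pnbh_compl_disjoint g A : [disjoint pnbh g A & pnbh g (~: A)].
Proof. by rewrite pnbhC disjoints_subset setCK. Qed.

Lemma pnbh_mate_disjoint g A : [disjoint pnbh g A & pnbh (mate g) A].
Proof.
by rewrite -[A in pnbh (mate g) A]setCK pnbh_mate_compl pnbh_compl_disjoint.
Qed.

Lemma pnbh_mate_meet g A B : A != B -> ~~ [disjoint pnbh g A & pnbh (mate g) B].
Proof.
move=> neAB; have [k kAB] : exists k, (k \in A) != (k \in B).
  apply/existsP; apply: contraNT neAB => /existsPn eqAB.
  by apply/eqP/setP => k; apply/eqP/negPn/eqAB.
apply/meetP; case kA: (k \in A) kAB; case kB: (k \in B) => // _.
  by exists (g, k); rewrite !inE /= ?eqxx ?neq_mate ?KnnM_eq_index ?kA ?kB.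
by exists (mate g, k); rewrite !inE /= ?eqxx ?mate_neq ?KnnM_eq_index ?kA ?kB.
Qed.

Lemma pnbh_meet_mates g A B : B != A -> B != ~: A ->
  ~~ [disjoint pnbh g A & pnbh g B] && ~~ [disjoint pnbh g A & pnbh (mate g) B].
Proof.
move=> neBA neBA'; rewrite pnbh_mate_meet 1?eq_sym // andbT.
rewrite -[pnbh g B]pnbh_mate_compl pnbh_mate_meet //.
by apply: contra neBA' => /eqP ->; rewrite setCK.
Qed.

Lemma mem_pnbh_or_mate g A g' k :
  ((g', k) \in pnbh g A) || ((mate g', k) \in pnbh g A).
Proof.
rewrite !inE /=; case: (mateP g g') => [->|->|ne].
- by rewrite eqxx mate_neq KnnM_eq_index //; case: (k \in A).
- by rewrite mateK eqxx mate_neq KnnM_eq_index //; case: (k \in A).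
- rewrite !neq_index // KnnM_mate 1?eq_sym //.
  by case: (eG g g'); case: (k \in A).
Qed.

Hypothesis n_ge3 : 3 <= n.

Lemma exists_index_neq2 (i j : 'I_n) : exists2 m : 'I_n, m != i & m != j.
Proof.
have : ~~ ([set: 'I_n] \subset [set i; j]).
  apply/negP => /subset_leq_card; rewrite cardsT card_ord cards2.
  by case: (i != j); lia.
by case/subsetPn => m _; rewrite !inE negb_or => /andP[mi mj]; exists m.
Qed.

Lemma pnbh_meet_far (g g' : G) (A B : {set T}) h k :
  g.2 != g'.2 -> h \in A -> k \notin A -> ~~ [disjoint pnbh g A & pnbh g' B].
Proof.
move=> ne hA kA; have [m mg mg'] := exists_index_neq2 g.2 g'.2.
have in_third (g0 : G) C c k0 : m != g0.2 ->
    (((c, m), k0) \in pnbh g0 C) = ((g0.1 != c) == (k0 \in C)).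
  by move=> mg0; rewrite inE /= neq_index // /KnnM /= [g0.2 == m]eq_sym mg0 andbT.
have g'_A (g0 : G) C k0 : g0.2 != g'.2 ->
    ((g', k0) \in pnbh g0 C) = ((g0.1 != g'.1) == (k0 \in C)).
  by move=> ne0; rewrite inE /= neq_index 1?eq_sym // /KnnM ne0 andbT.
have g'_B C k0 : ((g', k0) \in pnbh g' C) = (k0 \in C) by rewrite inE /= eqxx.
apply/meetP.
have [w1B|w1B] := boolP (((~~ g.1, m), h) \in pnbh g' B).
  by exists ((~~ g.1, m), h); rewrite // in_third // hA; case: g.1.
have [w2B|w2B] := boolP (((g.1, m), k) \in pnbh g' B).
  by exists ((g.1, m), k); rewrite // in_third // eqxx (negbTE kA).
rewrite !in_third // in w1B w2B.
case: (g'.1 =P g.1) => [e1|/eqP ne1].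
  exists (g', k); first by rewrite g'_A // e1 eqxx (negbTE kA).
  by move: w2B; rewrite g'_B e1 eqxx; case: (k \in B).
have e1 : g'.1 = ~~ g.1 by move: ne1; case: g.1; case: g'.1.
exists (g', h); first by rewrite g'_A // e1 hA; case: g.1.
by move: w1B; rewrite g'_B e1 eqxx /=; case: (h \in B).
Qed.

Hypothesis eH_sym : symmetric eH.
Hypothesis no_universal : forall h : T, ~~ universal eH h.

Lemma exists_notin_cnbh h : exists k, k \notin cnbh eH h.
Proof.
apply/existsP; move: (no_universal h); apply: contraNT => /existsPn all_in.
by apply/eqP/setP => k; rewrite in_setT; apply/negPn/all_in.
Qed.

Lemma modprod_sym : symmetric P.
Proof.
move=> x y; rewrite /modprod (eq_sym x y) (eq_sym x.1 y.1) (eq_sym x.2 y.2).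
by rewrite (eH_sym x.2) KnnMC.
Qed.

Lemma modprod_irr : irreflexive P.
Proof. by move=> x; rewrite /modprod eqxx. Qed.

Lemma modprod_diam3 x y : exists2 k, k <= 3 & walk P k x y.
Proof.
case: x y => [g h] [g' h']; have [m mg mg'] := exists_index_neq2 g.2 g'.2.
pose g1 : G := (~~ g.1, m).
have adj1 : P (g, h) (g1, h).
  have g1g : (g1 == g) = false by rewrite neq_index // eq_sym.
  rewrite (adj_cnbh modprod_irr) cnbh_modprod inE /= xpair_eqE eq_sym g1g.
  by rewrite /KnnM /= (eq_sym g.2) mg cnbh_refl; case: g.1.
have [k kN] := exists_notin_cnbh h.
have /meetP[w w1 w2] := pnbh_meet_far (g := g1) (cnbh eH h') mg' (cnbh_refl eH h) kN.
have w1' : w \in cnbh P (g1, h) by rewrite cnbh_modprod.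
have w2' : w \in cnbh P (g', h') by rewrite cnbh_modprod.
have [l le_l2 wl] := cnbh_meet_walk modprod_sym w1' w2'.
by exists l.+1; last exact: walkS adj1 wl.
Qed.

Lemma card_modprod : #|{: G * T}| = 2 * n * #|T|.
Proof. by rewrite !card_prod card_bool card_ord. Qed.

Lemma card_modprod_gt3 (x : G * T) : 3 < #|{: G * T}|.
Proof.
rewrite card_modprod; have : 0 < #|T| by apply/card_gt0P; exists x.2.
by nia.
Qed.

Definition matev (x : G * T) : G * T := (mate x.1, x.2).

Lemma twins_or_disjoint_modprod x y : x.1.2 = y.1.2 -> tequiv eH x.2 y.2 ->
  cnbh P x = cnbh P y \/ [disjoint cnbh P x & cnbh P y].
Proof.
case: x y => [g h] [g' h'] /= eqi; rewrite !cnbh_modprod /= /tequiv.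
case/orP=> /eqP ->; case: (mateP g g') => [->|->|]; rewrite ?eqi ?eqxx //.
- by left.
- by right; apply: pnbh_mate_disjoint.
- by right; apply: pnbh_compl_disjoint.
- by left; rewrite pnbh_mate_compl.
Qed.

Lemma meet_mate_modprod x y : ~~ ((x.1.2 == y.1.2) && tequiv eH x.2 y.2) ->
  ~~ [disjoint cnbh P x & cnbh P y] && ~~ [disjoint cnbh P x & cnbh P (matev y)].
Proof.
case: x y => [g h] [g' h']; rewrite !cnbh_modprod /= /tequiv.
case: (mateP g' g) => [->|->|ne].
- by rewrite eqxx negb_or => /andP[]; apply: pnbh_meet_mates.
- rewrite eqxx negb_or => /andP[neq1 neq2].
  by have := pnbh_meet_mates (mate g') neq1 neq2; rewrite mateK andbC.
- have [k kN] := exists_notin_cnbh h.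
  by rewrite (pnbh_meet_far (g' := g') _ ne (cnbh_refl eH h) kN)
             (pnbh_meet_far (g' := mate g') _ ne (cnbh_refl eH h) kN).
Qed.

Lemma geodesic3_mate x y : ~~ ((x.1.2 == y.1.2) && tequiv eH x.2 y.2) ->
  geodesic3 P y x (matev y).
Proof.
move=> nxy; have /andP[mxy mxy'] := meet_mate_modprod nxy.
apply: (geodesic3_disjoint modprod_sym modprod_irr _ mxy mxy').
  by rewrite !cnbh_modprod pnbh_mate_disjoint.
by rewrite cnbh_modprod; case: y {nxy mxy mxy'} => [g' h']; apply: mem_pnbh_or_mate.
Qed.

Lemma card_compl_strong_resolving S : strong_resolving P S -> #|~: S| <= n * kH eH.
Proof.
move=> resS; have /and3P[/eqP cover_T _ _] := partition_tpartition eH.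
pose beta (x : G * T) := (x.1.2, pblock (tpartition eH) x.2).
have inj_beta : {in ~: S &, injective beta}.
  move=> x y; rewrite !inE => xS yS [eqi /eqP]; rewrite eq_pblock_tpartition => eqt.
  apply/eqP; apply: contraT => nxy.
  have := strong_resolving_twins_or_disjoint modprod_sym modprod_irr modprod_diam3
    (card_modprod_gt3 x) resS nxy (twins_or_disjoint_modprod eqi eqt).
  by rewrite (negbTE xS) (negbTE yS).
rewrite -(card_in_imset inj_beta) /kH.
have -> : n * #|tpartition eH| = #|setX [set: 'I_n] (tpartition eH)|.
  by rewrite cardsX cardsT card_ord.
apply/subset_leq_card/subsetP => _ /imsetP[x _ ->].
by rewrite in_setX in_setT pblock_mem // cover_T.
Qed.

Definition reps : {set G * T} :=
  setX [set (false, i) | i : 'I_n] (transversal (tpartition eH) [set: T]).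

Lemma card_reps : #|reps| = n * kH eH.
Proof.
rewrite cardsX card_imset ?card_ord; last by move=> i j [].
by rewrite (card_transversal (transversalP (partition_tpartition eH))).
Qed.

Lemma reps_inj x y : x \in reps -> y \in reps -> x.1.2 = y.1.2 ->
  tequiv eH x.2 y.2 -> x = y.
Proof.
case: x y => [g h] [g' h']; rewrite !in_setX /=.
move=> /andP[/imsetP[i _ ->] hX] /andP[/imsetP[j _ ->] h'X] /= -> eqt.
congr pair; apply: (pblock_inj (transversalP (partition_tpartition eH))) => //.
by apply/eqP; rewrite eq_pblock_tpartition.
Qed.

Lemma strong_resolving_compl_reps : strong_resolving P (~: reps).
Proof.
have [x0 _|noV] := pickP (@predT (G * T)); last first.
  by apply/forallP => x; have := noV x.
apply: (strong_resolving_compl modprod_sym modprod_irr modprod_diam3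
          (card_modprod_gt3 x0)).
move=> x [g' h'] xR yR nxy; exists (matev (g', h')).
  move: yR; rewrite /reps !in_setX => /andP[/imsetP[i _ ->] _].
  by apply/nandP; left; apply/imsetP => -[j _ []].
apply: geodesic3_mate; apply: contra nxy => /andP[/eqP eqi eqt].
by rewrite (reps_inj xR yR eqi eqt).
Qed.

End ModularProduct.

Theorem mainTheorem12 (n : nat) (T : finType) (eH : rel T) :
  3 <= n -> symmetric eH -> irreflexive eH ->
  (forall h : T, ~~ universal eH h) ->
  sdim (modprod (KnnM n) eH) =
    2 * n * (\sum_(X in tpartition eH) #|X|) - n * kH eH.
Proof.
move=> n_ge3 eH_sym _ no_universal.
have card_compl (S : {set bool * 'I_n * T}) : #|~: S| = 2 * n * #|T| - #|S|.
  by rewrite -(card_modprod n T) -(cardsC S) addKn.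
rewrite sum_card_tpartition -(card_reps n eH) -card_compl.
apply: big_minn_attained => [||S resS].
- exact: strong_resolving_compl_reps.
- by rewrite card_compl card_modprod leq_subr.
- have := card_compl_strong_resolving n_ge3 eH_sym no_universal resS.
  by rewrite !card_compl card_reps // !leq_subLR addnC.
Qed.
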